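(* Let $X,Y\subseteq\omega$ and let $\prec_X$, $\prec_Y$ be transitive relations on $X$ and $Y$ respectively. Assume $f:X\to Y$ is a function which is surjective and satisfies $x\prec_X x'\iff f(x)\prec_Y f(x')$ for all $x,x'\in X$. Let $G_f=\{\langle x,f(x)\rangle\mid x\in X\}$. Then the map $\llbracket G_f\rrbracket$, given by $\llbracket G_f\rrbracket(I)=\{n\mid(\exists m\in I)\,\langle m,n\rangle\in G_f\}$, is a homeomorphism from $\mathcal{I}(\prec_X)$ onto $\mathcal{I}(\prec_Y)$. Moreover, if $\prec_X$ and $\prec_Y$ are c.e. and $f$ is computable, then $\llbracket G_f\rrbracket$ is a computable homeomorphism.
   Context: For a transitive relation $\prec$ on a set $S$, an ideal is a non-empty set $I\subseteq S$ that is a lower set ($b\prec a\in I\Rightarrow b\in I$) and directed (for $a,b\in I$ there is $c\in I$ with $a\prec c$, $b\prec c$). $\mathcal{I}(\prec)$ is the space of ideals with topology generated by $[n]_\prec=\{I\mid n\in I\}$, $n\in S$, an effective space with basic opens numbered by $n$. $\langle\cdot,\cdot\rangle$ is a computable pairing bijection on $\omega$. A computable homeomorphism is a homeomorphism such that preimages of basic open sets under it and its inverse are uniformly c.e. unions of basic open sets. *)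

(* Subsets of omega are predicates nat -> Prop. *)
From Stdlib Require Import Arith List Cantor.
Import ListNotations.

Definition pair (a b : nat) : nat := Cantor.to_nat (a, b).
Definition unpair1 (n : nat) : nat := fst (Cantor.of_nat n).
Definition unpair2 (n : nat) : nat := snd (Cantor.of_nat n).

Inductive code : Type :=
| cZ | cS | cI | cL | cR
| cComp (f g : code)
| cPair (f g : code)
| cRec (f g : code)
| cMu (f : code).

Inductive eval : code -> nat -> nat -> Prop :=
| ev_Z x : eval cZ x 0
| ev_S x : eval cS x (S x)
| ev_I x : eval cI x x
| ev_L x : eval cL x (unpair1 x)
| ev_R x : eval cR x (unpair2 x)
| ev_Comp f g x y z : eval g x y -> eval f y z -> eval (cComp f g) x z
| ev_Pair f g x a b : eval f x a -> eval g x b -> eval (cPair f g) x (pair a b)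
| ev_Rec0 f g a y : eval f a y -> eval (cRec f g) (pair a 0) y
| ev_RecS f g a n y z :
    eval (cRec f g) (pair a n) y -> eval g (pair a (pair n y)) z ->
    eval (cRec f g) (pair a (S n)) z
| ev_Mu f x n :
    eval f (pair x n) 0 ->
    (forall k, k < n -> exists v, eval f (pair x k) (S v)) ->
    eval (cMu f) x n.

Definition ce (A : nat -> Prop) : Prop :=
  exists c, forall x, A x <-> exists y, eval c x y.

Definition ce_rel (S : nat -> Prop) (R : nat -> nat -> Prop) : Prop :=
  ce (fun p => exists a b, p = pair a b /\ S a /\ S b /\ R a b).

Definition computable_on (X : nat -> Prop) (f : nat -> nat) : Prop :=
  exists c, forall x, X x -> eval c x (f x).

Definition transitive_on (S : nat -> Prop) (R : nat -> nat -> Prop) : Prop :=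
  forall a b c, S a -> S b -> S c -> R a b -> R b c -> R a c.

Definition ideal (S : nat -> Prop) (R : nat -> nat -> Prop) (I : nat -> Prop) : Prop :=
  (forall n, I n -> S n) /\
  (exists n, I n) /\
  (forall a b, S b -> R b a -> I a -> I b) /\
  (forall a b, I a -> I b -> exists c, I c /\ R a c /\ R b c).

Definition same (A B : nat -> Prop) : Prop := forall n, A n <-> B n.

(* U (a set of points of I(R) on S) is open in the topology generated by the
   basic sets [n] = {I | n in I}, n in S: every point of U lies in a finite
   intersection of basic sets contained in U. *)
Definition open_ideal (S : nat -> Prop) (R : nat -> nat -> Prop)
  (U : (nat -> Prop) -> Prop) : Prop :=
  forall I, ideal S R I -> U I ->
    exists l : list nat, Forall S l /\ Forall I l /\
      (forall J, ideal S R J -> Forall J l -> U J).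

Definition continuous_ideal (SX : nat -> Prop) (RX : nat -> nat -> Prop)
  (SY : nat -> Prop) (RY : nat -> nat -> Prop)
  (F : (nat -> Prop) -> (nat -> Prop)) : Prop :=
  forall n, SY n -> open_ideal SX RX (fun I => F I n).

(* F is a homeomorphism from I(RX) onto I(RY) with inverse G
   (points are identified up to extensional equality of sets). *)
Definition homeo_with (SX : nat -> Prop) (RX : nat -> nat -> Prop)
  (SY : nat -> Prop) (RY : nat -> nat -> Prop)
  (F G : (nat -> Prop) -> (nat -> Prop)) : Prop :=
  (forall I, ideal SX RX I -> ideal SY RY (F I)) /\
  (forall J, ideal SY RY J -> ideal SX RX (G J)) /\
  (forall I, ideal SX RX I -> same (G (F I)) I) /\
  (forall J, ideal SY RY J -> same (F (G J)) J) /\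
  (forall I I', ideal SX RX I -> ideal SX RX I' -> same I I' -> same (F I) (F I')) /\
  (forall J J', ideal SY RY J -> ideal SY RY J' -> same J J' -> same (G J) (G J')) /\
  continuous_ideal SX RX SY RY F /\
  continuous_ideal SY RY SX RX G.

Definition homeomorphism SX RX SY RY F : Prop :=
  exists G, homeo_with SX RX SY RY F G.

(* preimages of basic opens under F are uniformly c.e. unions of basic opens:
   there is a c.e. W with F^{-1}([n]) = U_{<n,m> in W} [m]. *)
Definition effective_preimages (SX : nat -> Prop) (RX : nat -> nat -> Prop)
  (SY : nat -> Prop) (F : (nat -> Prop) -> (nat -> Prop)) : Prop :=
  exists W : nat -> Prop, ce W /\
    forall n, SY n -> forall I, ideal SX RX I ->
      (F I n <-> exists m, W (pair n m) /\ I m).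

Definition computable_homeomorphism SX RX SY RY F : Prop :=
  exists G, homeo_with SX RX SY RY F G /\
    effective_preimages SX RX SY F /\ effective_preimages SY RY SX G.

Definition graph_of (X : nat -> Prop) (f : nat -> nat) : nat -> Prop :=
  fun p => exists x, X x /\ p = pair x (f x).

Definition enum_op (G : nat -> Prop) (I : nat -> Prop) : nat -> Prop :=
  fun n => exists m, I m /\ G (pair m n).

(* The graph of f transports ideals in both directions: the direct image f(I)
   of an ideal of RX is an ideal of RY, and the preimage {x in X | f x in J} of
   an ideal of RY is an ideal of RX, because f is onto and preserves and
   reflects the relations.  The two maps are mutually inverse; that the
   preimage of f(I) is I again uses that I is directed and downward closed.
   Both maps are continuous since f(I) contains n iff I meets f^-1(n), and
   the preimage of J contains x iff J contains f x; when f is computable the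
   graph of f, read in one direction or the other, is the c.e. set of codes
   of these basic opens. *)

From Stdlib Require Import Arith Lia List Cantor Setoid.
Import ListNotations.

Lemma unpair1_pair a b : unpair1 (pair a b) = a.
Proof. unfold unpair1, pair. now rewrite Cantor.cancel_of_to. Qed.

Lemma unpair2_pair a b : unpair2 (pair a b) = b.
Proof. unfold unpair2, pair. now rewrite Cantor.cancel_of_to. Qed.

Lemma pair_inj a b a' b' : pair a b = pair a' b' -> a = a' /\ b = b'.
Proof.
  intro E. split.
  - now rewrite <- (unpair1_pair a b), E, unpair1_pair.
  - now rewrite <- (unpair2_pair a b), E, unpair2_pair.
Qed.

Lemma pair_eq_0 a b : pair a b = 0 -> a = 0 /\ b = 0.
Proof. intro E. apply pair_inj. exact E. Qed.

Ltac split_pair_eqs :=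
  repeat match goal with E : pair _ _ = pair _ _ |- _ =>
    apply pair_inj in E as [? ?] end; subst.

(* [induction] yields no hypothesis for the derivations hidden in the
   premise of [ev_Mu], hence the explicit fixpoint. *)
Lemma eval_functional : forall c x v, eval c x v -> forall v', eval c x v' -> v = v'.
Proof.
  fix IH 4. intros c x v Hv v' Hv'.
  destruct Hv as [| | | | | f g x y z Hg Hf | f g x a b Hf Hg | f g a y Hf
                 | f g a n y z Hr Hg | f x n Hzero Hpos].
  1-5: now inversion Hv'.
  - inversion Hv' as [| | | | | ? ? ? y' ? Hg' Hf' | | | |]; subst.
    assert (y = y') as <- by exact (IH _ _ _ Hg _ Hg').
    exact (IH _ _ _ Hf _ Hf').
  - inversion Hv' as [| | | | | | ? ? ? a' b' Hf' Hg' | | |]; subst.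
    f_equal; [exact (IH _ _ _ Hf _ Hf') | exact (IH _ _ _ Hg _ Hg')].
  - remember (pair a 0) as p eqn:Ep.
    inversion Hv' as [| | | | | | | ? ? ? ? Hf' | ? ? ? ? ? ? Hr' Hg' |];
      subst; split_pair_eqs; try discriminate.
    exact (IH _ _ _ Hf _ Hf').
  - remember (pair a (S n)) as p eqn:Ep.
    inversion Hv' as [| | | | | | | ? ? ? ? Hf' | ? ? ? n' y' ? Hr' Hg' |];
      subst; split_pair_eqs; try discriminate.
    assert (n' = n) as -> by congruence. assert (y = y') as <- by exact (IH _ _ _ Hr _ Hr').
    exact (IH _ _ _ Hg _ Hg').
  - inversion Hv' as [| | | | | | | | | f' x' n' Hzero' Hpos']; subst.
    destruct (lt_eq_lt_dec n v') as [[Hlt | Heq] | Hgt]; auto.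
    + destruct (Hpos' n Hlt) as [w Hw]. discriminate (IH _ _ _ Hzero _ Hw).
    + destruct (Hpos v' Hgt) as [w Hw]. discriminate (IH _ _ _ Hw _ Hzero').
Qed.

Lemma eval_cComp_iff f g x z :
  eval (cComp f g) x z <-> exists y, eval g x y /\ eval f y z.
Proof.
  split.
  - intro H. inversion H; subst. eauto.
  - intros [y [Hg Hf]]. exact (ev_Comp _ _ _ _ _ Hg Hf).
Qed.

Lemma eval_cPair_iff f g x v :
  eval (cPair f g) x v <-> exists a b, v = pair a b /\ eval f x a /\ eval g x b.
Proof.
  split.
  - intro H. inversion H; subst. eauto.
  - intros [a [b [-> [Hf Hg]]]]. exact (ev_Pair _ _ _ _ _ Hf Hg).
Qed.

Lemma eval_cL_pair a b : eval cL (pair a b) a.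
Proof. rewrite <- (unpair1_pair a b) at 2. apply ev_L. Qed.

Lemma eval_cR_pair a b : eval cR (pair a b) b.
Proof. rewrite <- (unpair2_pair a b) at 2. apply ev_R. Qed.

Definition pred_code : code := cComp (cRec cZ (cComp cL cR)) (cPair cZ cI).
Definition sub_code : code := cRec cI (cComp pred_code (cComp cR cR)).
Definition swap_code : code := cPair cR cL.
Definition dist_code : code := cPair sub_code (cComp sub_code swap_code).
Definition zero_test_code : code := cMu cL.
Definition graph_test_code (c : code) : code :=
  cComp zero_test_code (cComp dist_code (cPair (cComp c cL) cR)).

Lemma eval_pred_code x : eval pred_code x (pred x).
Proof.
  assert (Hrec : forall a n, eval (cRec cZ (cComp cL cR)) (pair a n) (pred n)).
  { intro a. induction n as [|n IHn].
    - apply ev_Rec0, ev_Z.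
    - apply (ev_RecS _ _ _ _ _ _ IHn). apply eval_cComp_iff.
      exists (pair n (pred n)). split; [apply eval_cR_pair | apply eval_cL_pair]. }
  apply eval_cComp_iff. exists (pair 0 x). split.
  - apply ev_Pair; [apply ev_Z | apply ev_I].
  - apply Hrec.
Qed.

Lemma eval_sub_code a n : eval sub_code (pair a n) (a - n).
Proof.
  induction n as [|n IHn].
  - apply ev_Rec0. rewrite Nat.sub_0_r. apply ev_I.
  - apply (ev_RecS _ _ _ _ _ _ IHn). apply eval_cComp_iff.
    exists (a - n). split.
    + apply eval_cComp_iff. exists (pair n (a - n)). split; apply eval_cR_pair.
    + replace (a - S n) with (pred (a - n)) by lia. apply eval_pred_code.
Qed.

Lemma eval_swap_code p : eval swap_code p (pair (unpair2 p) (unpair1 p)).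
Proof. apply ev_Pair; [apply ev_R | apply ev_L]. Qed.

Lemma eval_dist_code a b : eval dist_code (pair a b) (pair (a - b) (b - a)).
Proof.
  apply ev_Pair; [apply eval_sub_code|].
  apply eval_cComp_iff. exists (pair b a). split.
  - pose proof (eval_swap_code (pair a b)) as Hswap.
    rewrite unpair1_pair, unpair2_pair in Hswap. exact Hswap.
  - apply eval_sub_code.
Qed.

Lemma zero_test_code_defined x : (exists y, eval zero_test_code x y) <-> x = 0.
Proof.
  split.
  - intros [n H]. inversion H as [| | | | | | | | | ? ? ? Hzero _]; subst.
    exact (eval_functional _ _ _ (eval_cL_pair x n) _ Hzero).
  - intros ->. exists 0. apply ev_Mu; [apply eval_cL_pair | intros k Hk; lia].
Qed.

Lemma graph_test_code_defined c p :
  (exists y, eval (graph_test_code c) p y) <-> eval c (unpair1 p) (unpair2 p).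
Proof.
  unfold graph_test_code. split.
  - intros [y Hy]. apply eval_cComp_iff in Hy as [d [Hd Hzero]].
    assert (d = 0) as -> by (apply zero_test_code_defined; eauto).
    apply eval_cComp_iff in Hd as [w [Hw Hdist]].
    apply eval_cPair_iff in Hw as [a [b [-> [Ha Hb]]]].
    apply eval_cComp_iff in Ha as [p1 [Hp1 Ha]].
    rewrite <- (eval_functional _ _ _ (ev_L p) _ Hp1) in Ha.
    rewrite (eval_functional _ _ _ (ev_R p) _ Hb).
    pose proof (eval_functional _ _ _ (eval_dist_code a b) _ Hdist) as Hab.
    apply pair_eq_0 in Hab. replace b with a by lia. exact Ha.
  - intro Hc. destruct (proj2 (zero_test_code_defined 0) eq_refl) as [y Hy].
    exists y. apply eval_cComp_iff. exists 0. split; [|exact Hy].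
    apply eval_cComp_iff. exists (pair (unpair2 p) (unpair2 p)). split.
    + apply ev_Pair; [|apply ev_R]. apply eval_cComp_iff. eauto using ev_L.
    + pose proof (eval_dist_code (unpair2 p) (unpair2 p)) as Hdist.
      rewrite Nat.sub_diag in Hdist. exact Hdist.
Qed.

Lemma ce_preimage (A : nat -> Prop) (g : nat -> nat) (h : code) :
  (forall x, eval h x (g x)) -> ce A -> ce (fun x => A (g x)).
Proof.
  intros Hh [c Hc]. exists (cComp c h). intro x. rewrite Hc. split.
  - intros [y Hy]. exists y. apply eval_cComp_iff. eauto.
  - intros [y Hy]. apply eval_cComp_iff in Hy as [w [Hw Hy]].
    rewrite (eval_functional _ _ _ (Hh x) _ Hw). eauto.
Qed.

Lemma ce_graph_on (X : nat -> Prop) (f : nat -> nat) :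
  computable_on X f ->
  exists W, ce W /\ forall x y, X x -> (W (pair x y) <-> f x = y).
Proof.
  intros [c Hc]. exists (fun p => eval c (unpair1 p) (unpair2 p)). split.
  - exists (graph_test_code c). intro p. symmetry. apply graph_test_code_defined.
  - intros x y Xx. rewrite unpair1_pair, unpair2_pair. split.
    + intro Hy. exact (eval_functional _ _ _ (Hc x Xx) _ Hy).
    + intros <-. exact (Hc x Xx).
Qed.

Lemma ce_graph_on_swap (X : nat -> Prop) (f : nat -> nat) :
  computable_on X f ->
  exists W, ce W /\ forall x y, X x -> (W (pair y x) <-> f x = y).
Proof.
  intro Hf. destruct (ce_graph_on X f Hf) as [W [HW HWf]].
  exists (fun p => W (pair (unpair2 p) (unpair1 p))). split.
  - exact (ce_preimage W _ swap_code eval_swap_code HW).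
  - intros x y Xx. rewrite unpair1_pair, unpair2_pair. exact (HWf x y Xx).
Qed.

Definition image_set (f : nat -> nat) (I : nat -> Prop) : nat -> Prop :=
  fun n => exists m, I m /\ f m = n.

Definition preimage_set (X : nat -> Prop) (f : nat -> nat) (J : nat -> Prop) : nat -> Prop :=
  fun x => X x /\ J (f x).

Lemma enum_op_graph_of (X : nat -> Prop) (f : nat -> nat) (I : nat -> Prop) :
  (forall m, I m -> X m) -> same (enum_op (graph_of X f) I) (image_set f I).
Proof.
  intros HIX n. split.
  - intros [m [Im [x [_ E]]]]. apply pair_inj in E as [<- ->]. exists m. auto.
  - intros [m [Im <-]]. exists m. split; [exact Im|]. exists m. auto.
Qed.

Lemma ideal_same S R (A B : nat -> Prop) : same A B -> ideal S R A -> ideal S R B.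
Proof.
  intros HAB [HS [[n An] [Hdown Hdir]]].
  refine (conj _ (conj _ (conj _ _))).
  - intros m Bm. apply HS, HAB, Bm.
  - exists n. apply HAB, An.
  - intros a b Sb Rba Ba. apply HAB. apply (Hdown a); [exact Sb | exact Rba | apply HAB, Ba].
  - intros a b Ba Bb. destruct (Hdir a b (proj2 (HAB a) Ba) (proj2 (HAB b) Bb))
      as [c [Ac Hac]]. exists c. split; [apply HAB, Ac | exact Hac].
Qed.

Lemma open_ideal_basic_union S R (U : (nat -> Prop) -> Prop) (B : nat -> Prop) :
  (forall I, ideal S R I -> (U I <-> exists m, B m /\ I m)) -> open_ideal S R U.
Proof.
  intros HU I HI UI. destruct (proj1 (HU I HI) UI) as [m [Bm Im]].
  exists [m]. split; [|split].
  - constructor; [apply (proj1 HI), Im | constructor].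
  - constructor; [exact Im | constructor].
  - intros J HJ Jm. apply (HU J HJ). exists m. split; [exact Bm|]. now inversion Jm.
Qed.

Section Transport.

Variables (X Y : nat -> Prop) (RX RY : nat -> nat -> Prop) (f : nat -> nat).
Hypothesis f_into : forall x, X x -> Y (f x).
Hypothesis f_onto : forall y, Y y -> exists x, X x /\ f x = y.
Hypothesis f_rel : forall x x', X x -> X x' -> (RX x x' <-> RY (f x) (f x')).

Lemma ideal_image_set I : ideal X RX I -> ideal Y RY (image_set f I).
Proof.
  intros [HIX [[m0 Im0] [Hdown Hdir]]].
  refine (conj _ (conj _ (conj _ _))).
  - intros n [m [Im <-]]. auto.
  - exists (f m0), m0. auto.
  - intros a b Yb Rba [m [Im <-]].
    destruct (f_onto b Yb) as [x [Xx <-]]. exists x. split; [|reflexivity].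
    apply (Hdown m x Xx); [apply f_rel|]; auto.
  - intros a b [m [Im <-]] [m' [Im' <-]].
    destruct (Hdir m m' Im Im') as [c [Ic [Hmc Hm'c]]].
    exists (f c). split; [exists c; auto|]. split; apply f_rel; auto.
Qed.

Lemma ideal_preimage_set J : ideal Y RY J -> ideal X RX (preimage_set X f J).
Proof.
  intros [HJY [[n0 Jn0] [Hdown Hdir]]].
  refine (conj _ (conj _ (conj _ _))).
  - intros x [Xx _]. exact Xx.
  - destruct (f_onto n0 (HJY n0 Jn0)) as [x [Xx <-]]. exists x. split; auto.
  - intros a b Xb Rba [Xa Ja]. split; [exact Xb|].
    apply (Hdown (f a)); [auto | apply f_rel | ]; auto.
  - intros a b [Xa Ja] [Xb Jb].
    destruct (Hdir _ _ Ja Jb) as [c [Jc [Hac Hbc]]].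
    destruct (f_onto c (HJY c Jc)) as [x [Xx <-]].
    exists x. split; [split; auto|]. split; apply f_rel; auto.
Qed.

Lemma preimage_image_set I : ideal X RX I -> same (preimage_set X f (image_set f I)) I.
Proof.
  intros [HIX [_ [Hdown Hdir]]] x. split.
  - intros [Xx [m [Im Hmx]]].
    destruct (Hdir m m Im Im) as [c [Ic [Hmc _]]].
    apply (Hdown c x Xx); [|exact Ic].
    apply f_rel; auto. rewrite <- Hmx. apply f_rel; auto.
  - intro Ix. split; [auto | exists x; auto].
Qed.

Lemma image_preimage_set J :
  (forall n, J n -> Y n) -> same (image_set f (preimage_set X f J)) J.
Proof.
  intros HJY n. split.
  - intros [m [[_ Jm] <-]]. exact Jm.
  - intro Jn. destruct (f_onto n (HJY n Jn)) as [x [Xx <-]].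
    exists x. split; [split; assumption | reflexivity].
Qed.

Lemma homeo_with_graph :
  homeo_with X RX Y RY (enum_op (graph_of X f)) (preimage_set X f).
Proof.
  assert (HF : forall I, ideal X RX I -> same (enum_op (graph_of X f) I) (image_set f I))
    by (intros I HI; exact (enum_op_graph_of X f I (proj1 HI))).
  refine (conj _ (conj _ (conj _ (conj _ (conj _ (conj _ (conj _ _))))))).
  - intros I HI. apply (ideal_same _ _ (image_set f I)).
    + intro n. symmetry. apply HF, HI.
    + apply ideal_image_set, HI.
  - exact ideal_preimage_set.
  - intros I HI x. unfold preimage_set at 1. rewrite (HF I HI (f x)).
    apply preimage_image_set, HI.
  - intros J HJ n. rewrite (enum_op_graph_of X f (preimage_set X f J) (fun x Hx => proj1 Hx) n).
    apply image_preimage_set, HJ.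
  - intros I I' HI HI' HII' n. rewrite (HF I HI n), (HF I' HI' n).
    split; intros [m [Hm <-]]; exists m; split; auto; apply HII', Hm.
  - intros J J' _ _ HJJ' x. unfold preimage_set. rewrite (HJJ' (f x)). reflexivity.
  - intros n _. apply (open_ideal_basic_union _ _ _ (fun m => f m = n)).
    intros I HI. rewrite (HF I HI n).
    split; intros [m [Hm Hm']]; exists m; auto.
  - intros x Xx. apply (open_ideal_basic_union _ _ _ (fun m => m = f x)).
    intros J _. unfold preimage_set.
    split; [intros [_ Jx]; eauto | intros [m [-> Jm]]; auto].
Qed.

Lemma effective_preimages_graph :
  computable_on X f -> effective_preimages X RX Y (enum_op (graph_of X f)).
Proof.
  intro Hf. destruct (ce_graph_on_swap X f Hf) as [W [HW HWf]].
  exists W. split; [exact HW|]. intros n _ I HI.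
  rewrite (enum_op_graph_of X f I (proj1 HI) n).
  split.
  - intros [m [Im <-]]. exists m. split; [apply HWf|]; auto. apply HI, Im.
  - intros [m [Wm Im]]. exists m. split; [exact Im|]. apply HWf; [apply HI, Im | exact Wm].
Qed.

Lemma effective_preimages_preimage_set :
  computable_on X f -> effective_preimages Y RY X (preimage_set X f).
Proof.
  intro Hf. destruct (ce_graph_on X f Hf) as [W [HW HWf]].
  exists W. split; [exact HW|]. intros x Xx J _. unfold preimage_set.
  split.
  - intros [_ Jx]. exists (f x). split; [apply HWf|]; auto.
  - intros [m [Wm Jm]]. apply HWf in Wm as <-; auto.
Qed.

End Transport.

Theorem lemma20 (X Y : nat -> Prop) (RX RY : nat -> nat -> Prop) (f : nat -> nat) :
  transitive_on X RX -> transitive_on Y RY ->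
  (forall x, X x -> Y (f x)) ->
  (forall y, Y y -> exists x, X x /\ f x = y) ->
  (forall x x', X x -> X x' -> (RX x x' <-> RY (f x) (f x'))) ->
  homeomorphism X RX Y RY (enum_op (graph_of X f)) /\
  (ce_rel X RX -> ce_rel Y RY -> computable_on X f ->
   computable_homeomorphism X RX Y RY (enum_op (graph_of X f))).
Proof.
  (* Neither transitivity nor the c.e. presentations of the relations are needed. *)
  intros _ _ f_into f_onto f_rel.
  pose proof (homeo_with_graph X Y RX RY f f_into f_onto f_rel) as Hhomeo.
  split.
  - exists (preimage_set X f). exact Hhomeo.
  - intros _ _ Hf. exists (preimage_set X f). split; [exact Hhomeo | split].
    + apply effective_preimages_graph, Hf.
    + apply effective_preimages_preimage_set, Hf.
Qed.
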